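(* Let $\beta\in\mathcal{A}$. If $\nu^\star\in N_\beta$ is an $X$-circuit of $\mathcal{A}$, then the set $(\nu^\star)^+=\{\alpha\in\mathcal{A}:\nu^\star_\alpha>0\}=\operatorname{supp}\nu^\star\setminus\{\beta\}$ is affinely independent (as a subset of $\mathbb{R}^n$).
   Context: $X\subset\mathbb{R}^n$ is a nonempty closed convex set and $\mathcal{A}\subset\mathbb{R}^n$ is a nonempty finite set. $\mathbb{R}^{\mathcal{A}}$ denotes real vectors indexed by $\mathcal{A}$. $\mathcal{A}$ is viewed as the linear map $\mathbb{R}^{\mathcal{A}}\to\mathbb{R}^n$, $\mathcal{A}\nu=\sum_{\alpha\in\mathcal{A}}\alpha\nu_\alpha$. The support function of $X$ is $\sigma_X(y)=\sup\{y^Tx:x\in X\}\in\mathbb{R}\cup\{+\infty\}$. For $\beta\in\mathcal{A}$, $N_\beta=\{\nu\in\mathbb{R}^{\mathcal{A}}:\nu_\alpha\ge0\ \forall\alpha\neq\beta,\ \sum_{\alpha}\nu_\alpha=0\}$. A vector $\nu^\star\in N_\beta$ is an $X$-circuit of $\mathcal{A}$ if (1) $\nu^\star\neq0$, (2) $\sigma_X(-\mathcal{A}\nu^\star)<\infty$, and (3) $\nu^\star$ cannot be written as a convex combination of two non-proportional vectors $\nu^{(1)},\nu^{(2)}\in N_\beta$ such that the map $\nu\mapsto\sigma_X(-\mathcal{A}\nu)$ is affine on the segment $[\nu^{(1)},\nu^{(2)}]$. *)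

From HB Require Import structures.
From mathcomp Require Import all_boot all_order all_algebra.
From mathcomp Require Import all_classical all_reals all_analysis.
Set Implicit Arguments. Unset Strict Implicit. Unset Printing Implicit Defensive.
Import Order.TTheory GRing.Theory Num.Theory.
Import numFieldNormedType.Exports.
Local Open Scope classical_set_scope.
Local Open Scope ring_scope.

(* Points of R^n are row vectors 'rV[R]_n.  The finite nonempty set
   A = {a_0,...,a_(m-1)} ⊂ R^n is given by an injective family a : 'I_m -> 'rV_n
   with 0 < m; vectors of R^A are functions 'I_m -> R. *)

Definition dotp (R : realType) (n : nat) (y x : 'rV[R]_n) : R :=
  \sum_(j < n) y 0 j * x 0 j.

Definition convexR (R : realType) (n : nat) (X : set 'rV[R]_n) : Prop :=
  forall x y (t : R), X x -> X y -> 0 <= t -> t <= 1 -> X ((1 - t) *: x + t *: y).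

Definition supportf (R : realType) (n : nat) (X : set 'rV[R]_n) (y : 'rV[R]_n)
  : \bar R := ereal_sup [set (dotp y x)%:E | x in X].

Definition Amap (R : realType) (n m : nat) (a : 'I_m -> 'rV[R]_n)
  (nu : 'I_m -> R) : 'rV[R]_n := \sum_(i < m) nu i *: a i.

Definition Nbeta (R : realType) (m : nat) (b : 'I_m) (nu : 'I_m -> R) : Prop :=
  (forall i, i != b -> 0 <= nu i) /\ \sum_(i < m) nu i = 0.

Definition proportional (R : realType) (m : nat) (u v : 'I_m -> R) : Prop :=
  exists c : R, (u = fun i => c * v i) \/ (v = fun i => c * u i).

Definition segpt (R : realType) (m : nat) (u v : 'I_m -> R) (t : R) : 'I_m -> R :=
  fun i => (1 - t) * u i + t * v i.

Definition sigA (R : realType) (n m : nat) (X : set 'rV[R]_n)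
  (a : 'I_m -> 'rV[R]_n) (nu : 'I_m -> R) : \bar R := supportf X (- Amap a nu).

Definition affine_on_seg (R : realType) (m : nat) (f : ('I_m -> R) -> \bar R)
  (u v : 'I_m -> R) : Prop :=
  (forall t : R, 0 <= t -> t <= 1 -> f (segpt u v t) \is a fin_num) /\
  (forall t : R, 0 <= t -> t <= 1 ->
     f (segpt u v t) = ((1 - t)%:E * f u + t%:E * f v)%E).

Definition Xcircuit (R : realType) (n m : nat) (X : set 'rV[R]_n)
  (a : 'I_m -> 'rV[R]_n) (b : 'I_m) (nu : 'I_m -> R) : Prop :=
  [/\ Nbeta b nu,
      nu <> (fun _ => 0),
      (sigA X a nu < +oo)%E &
      ~ (exists (nu1 nu2 : 'I_m -> R) (l : R),
           Nbeta b nu1 /\ Nbeta b nu2 /\ ~ proportional nu1 nu2 /\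
           0 < l /\ l < 1 /\
           nu = (fun i => l * nu1 i + (1 - l) * nu2 i) /\
           affine_on_seg (sigA X a) nu1 nu2)].

Definition aff_indep (R : realType) (n m : nat) (a : 'I_m -> 'rV[R]_n)
  (S : pred 'I_m) : Prop :=
  forall c : 'I_m -> R,
    \sum_(i < m | S i) c i = 0 -> \sum_(i < m | S i) c i *: a i = 0 ->
    forall i, S i -> c i = 0.

From HB Require Import structures.
From mathcomp Require Import all_boot all_order all_algebra.
From mathcomp Require Import all_classical all_reals all_analysis.
From mathcomp Require Import ring lra.
Set Implicit Arguments. Unset Strict Implicit. Unset Printing Implicit Defensive.
Import Order.TTheory GRing.Theory Num.Theory.
Import numFieldNormedType.Exports.
Local Open Scope classical_set_scope.
Local Open Scope ring_scope.

(* Let nu be an X-circuit and suppose the points a_i with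
   nu_i > 0 carry an affine dependence c with c_i <> 0 for some such i.
   Extending c by zero gives a direction d with A d = 0, sum d = 0, d
   supported on {nu > 0} (so d_b = 0, as nu_b < 0).  Along the line
   k |-> nu + k d the map nu |-> sigma_X(-A nu) is constant, and for
   |k| <= eps (eps > 0 small) the line stays in N_b.  Hence nu is the
   midpoint of nu + eps d and nu - eps d, two non-proportional vectors of
   N_b (their b-coordinates agree and are nonzero, their i-coordinates
   differ) on whose segment sigma_X(-A .) is affine: this contradicts
   condition (3) of the definition of an X-circuit. *)

Definition line_pt (R : realType) (m : nat) (nu d : 'I_m -> R) (k : R)
  : 'I_m -> R := fun j => nu j + k * d j.

Lemma Nbeta_neg_at (R : realType) (m : nat) (b : 'I_m) (nu : 'I_m -> R) :
  Nbeta b nu -> nu <> (fun _ => 0) -> nu b < 0.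
Proof.
move=> [hpos hsum] hnz; rewrite ltNge; apply/negP => hb.
apply: hnz; apply: funext => j; apply: (psumr_eq0P (P := predT)) => // k _.
by have [->|/hpos] := eqVneq k b.
Qed.

Lemma extend_by_zero_sums (R : realType) (n m : nat) (a : 'I_m -> 'rV[R]_n)
  (S : pred 'I_m) (c : 'I_m -> R) :
  let d := fun j => if S j then c j else 0 in
  \sum_(i < m | S i) c i = 0 -> \sum_(i < m | S i) c i *: a i = 0 ->
  \sum_(i < m) d i = 0 /\ \sum_(i < m) d i *: a i = 0.
Proof.
move=> d hs hA; split; first by rewrite -[RHS]hs (big_mkcond S).
rewrite -[RHS]hA (big_mkcond S) /=.
by apply: eq_bigr => j _; rewrite /d; case: ifP => //; rewrite scale0r.
Qed.

Lemma Amap_line_pt (R : realType) (n m : nat) (a : 'I_m -> 'rV[R]_n)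
  (nu d : 'I_m -> R) (k : R) :
  \sum_(i < m) d i *: a i = 0 -> Amap a (line_pt nu d k) = Amap a nu.
Proof.
move=> hd; rewrite /Amap /line_pt.
under eq_bigr => j _ do rewrite scalerDl -scalerA.
by rewrite big_split /= -scaler_sumr hd scaler0 addr0.
Qed.

Lemma sigA_fin (R : realType) (n m : nat) (X : set 'rV[R]_n)
  (a : 'I_m -> 'rV[R]_n) (nu : 'I_m -> R) :
  X !=set0 -> (sigA X a nu < +oo)%E -> sigA X a nu \is a fin_num.
Proof.
move=> [x0 Xx0] hlt; rewrite fin_numE (lt_eqF hlt) andbT; apply/eqP => heq.
have : ((dotp (- Amap a nu) x0)%:E <= sigA X a nu)%E.
  by apply: ereal_sup_ubound; exists x0.
by rewrite heq leeNy_eq.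
Qed.

Lemma Nbeta_line_pt (R : realType) (m : nat) (b : 'I_m) (nu d : 'I_m -> R) :
  Nbeta b nu -> \sum_(i < m) d i = 0 -> (forall j, d j != 0 -> 0 < nu j) ->
  exists2 eps : R, 0 < eps &
    forall k, `|k| <= eps -> Nbeta b (line_pt nu d k).
Proof.
move=> [hpos hsum] hds hsupp.
pose S := \sum_(j < m | 0 < nu j) `|d j| / nu j.
have S0 : 0 <= S by apply: sumr_ge0 => j Pj; rewrite divr_ge0 // ltW.
(* eps = 1 / (1 + S) satisfies eps |d_j| <= nu_j whenever nu_j > 0 *)
have eps0 : 0 < (1 + S)^-1 by rewrite invr_gt0; lra.
have small_step j : 0 < nu j -> (1 + S)^-1 * `|d j| <= nu j.
  move=> Pj; have dS : `|d j| / nu j <= S.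
    rewrite /S (bigD1 j) //= lerDl; apply: sumr_ge0 => k /andP[Pk _].
    by rewrite divr_ge0 // ltW.
  rewrite mulrC ler_pdivrMr; last lra.
  by rewrite mulrC -ler_pdivrMr //; lra.
exists (1 + S)^-1 => // k hk; split; last first.
  by rewrite /line_pt big_split /= -mulr_sumr hds mulr0 hsum addr0.
move=> j jb; rewrite /line_pt; have [dj0|/hsupp Pj] := eqVneq (d j) 0.
  by rewrite dj0 mulr0 addr0; apply: hpos.
have : `|k * d j| <= (1 + S)^-1 * `|d j| by rewrite normrM ler_wpM2r.
by rewrite ler_norml => /andP[+ _]; have := small_step j Pj; lra.
Qed.

(* Two opposite perturbations nu + e d, nu - e d are not proportional when
   nu_b <> 0 = d_b and e d_i <> 0: the b-coordinates force the factor to be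
   1, and then the i-coordinates differ. *)
Lemma line_pts_not_proportional (R : realType) (m : nat) (b i : 'I_m)
  (nu d : 'I_m -> R) (e : R) :
  nu b != 0 -> d b = 0 -> e * d i != 0 ->
  ~ proportional (line_pt nu d e) (line_pt nu d (- e)).
Proof.
move=> nub db edi.
suff opp f : f * d i != 0 ->
             forall k, line_pt nu d f <> (fun j => k * line_pt nu d (- f) j).
  move=> [k [hk|hk]]; first exact: opp hk.
  by have := opp (- e); rewrite opprK mulNr oppr_eq0 => /(_ edi k).
move=> fdi k hk.
have := congr1 (fun g => g b) hk; rewrite /line_pt /= db !mulr0 !addr0 => hb.
have k1 : k = 1.
  have : (1 - k) * nu b = 0 by rewrite mulrBl mul1r; lra.
  by move/eqP; rewrite mulf_eq0 (negbTE nub) orbF subr_eq0 => /eqP.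
have := congr1 (fun g => g i) hk; rewrite /line_pt /= k1 mul1r => hi.
by move/eqP: fdi; apply; lra.
Qed.

Lemma affine_on_constant_line (R : realType) (m : nat)
  (f : ('I_m -> R) -> \bar R) (nu d : 'I_m -> R) (e : R) :
  (forall k, f (line_pt nu d k) = f nu) -> f nu \is a fin_num ->
  affine_on_seg f (line_pt nu d e) (line_pt nu d (- e)).
Proof.
move=> hconst hfin.
have seg t : segpt (line_pt nu d e) (line_pt nu d (- e)) t =
             line_pt nu d ((1 - 2 * t) * e).
  by apply: funext => j; rewrite /segpt /line_pt; ring.
split=> t _ _; rewrite seg hconst //.
rewrite !hconst -(fineK hfin) -!EFinM -EFinD; congr (_%:E); ring.
Qed.

Theorem proposition3p4 (R : realType) (n m : nat) (X : set 'rV[R]_n)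
  (a : 'I_m -> 'rV[R]_n) (b : 'I_m) (nu : 'I_m -> R) :
  X !=set0 -> closed X -> convexR X ->
  (0 < m)%N -> injective a ->
  Xcircuit X a b nu ->
  aff_indep a (fun i => 0 < nu i).
Proof.
move=> X0 _ _ _ _ [hN hnz hlt hnot] c hs hA i Pi.
apply/eqP/negPn/negP => ci; apply: hnot.
have nub := Nbeta_neg_at hN hnz.
pose d := fun j => if 0 < nu j then c j else 0.
have [hds hdA] := extend_by_zero_sums hs hA.
have hsupp j : d j != 0 -> 0 < nu j by rewrite /d; case: ifP; rewrite ?eqxx.
have [eps eps0 hline] := Nbeta_line_pt hN hds hsupp.
have db : d b = 0 by rewrite /d ltNge ltW.
have edi : eps * d i != 0 by rewrite /d Pi mulf_neq0 // gt_eqF.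
have hconst k : sigA X a (line_pt nu d k) = sigA X a nu.
  by rewrite /sigA Amap_line_pt.
exists (line_pt nu d eps), (line_pt nu d (- eps)), (1/2).
split; first by apply: hline; rewrite ger0_norm // ltW.
split; first by apply: hline; rewrite normrN ger0_norm // ltW.
split; first exact: line_pts_not_proportional (negbT (lt_eqF nub)) db edi.
do 2 (split; first lra); split.
  by apply: funext => j; rewrite /line_pt; field.
exact: affine_on_constant_line eps hconst (sigA_fin X0 hlt).
Qed.
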